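(* Let $G$ be a group with Property RD with respect to a length function $l$, and let $h\in G$ be any element (not necessarily of finite order). For $m\ge0$ let $n_m=|\{g\in C(h): l(g)=m\}|$, and assume $(n_m)$ does not grow polynomially: for every polynomial $P$ there are infinitely many $m$ with $n_m>P(m)$. Then every bounded trace $\tau:C^*_{\mathrm{red}}G\to\mathbb{C}$ satisfies $\tau(h)=0$.
   Context: A length function on $G$ is $l:G\to\mathbb{Z}_{\ge0}$ with $l(fg)\le l(f)+l(g)$, $l(g^{-1})=l(g)$, $l(e)=0$, and $l^{-1}(S)$ finite for finite $S$. $\|\sum c_g g\|_{H^s}^2=\sum|c_g|^2(1+l(g))^{2s}$, and $H^s(G)$ is the completion of $\mathbb{C}G$ in this norm. $G$ has Property RD with respect to $l$ if there are constants $C,s$ with $\|x\|_{C^*_{\mathrm{red}}G}\le C\|x\|_{H^s}$ for all $x\in\mathbb{C}G$. $C(h)$ is the conjugacy class of $h$. A trace is a bounded linear functional $\tau$ with $\tau(ab)=\tau(ba)$. *)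

From Stdlib Require Import Reals List.
From Stdlib Require Import ClassicalEpsilon.
Import ListNotations.
Open Scope R_scope.

Definition Cx : Type := (R * R)%type.
Definition C0 : Cx := (0, 0).
Definition C1 : Cx := (1, 0).
Definition Cadd (z w : Cx) : Cx := (fst z + fst w, snd z + snd w).
Definition Cmul (z w : Cx) : Cx :=
  (fst z * fst w - snd z * snd w, fst z * snd w + snd z * fst w).
Definition Cnorm2 (z : Cx) : R := fst z * fst z + snd z * snd z.
Definition Cmod (z : Cx) : R := sqrt (Cnorm2 z).

Definition is_group {G : Type} (mul : G -> G -> G) (inv : G -> G) (e : G) : Prop :=
  (forall a b c, mul a (mul b c) = mul (mul a b) c) /\
  (forall a, mul e a = a) /\ (forall a, mul a e = a) /\
  (forall a, mul (inv a) a = e) /\ (forall a, mul a (inv a) = e).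

(* Length function l : G -> Z_{>=0} (here nat), with finite preimages of
   finite sets. *)
Definition is_length_function {G : Type} (mul : G -> G -> G) (inv : G -> G) (e : G)
  (l : G -> nat) : Prop :=
  (forall f g, (l (mul f g) <= l f + l g)%nat) /\
  (forall g, l (inv g) = l g) /\
  l e = 0%nat /\
  (forall S : list nat, exists L : list G, forall g, In (l g) S -> In g L).

Definition rsum {G : Type} (f : G -> R) (L : list G) : R :=
  fold_right (fun g acc => f g + acc) 0 L.
Definition csum {G : Type} (f : G -> Cx) (L : list G) : Cx :=
  fold_right (fun g acc => Cadd (f g) acc) C0 L.

(* ---------- the group algebra CG ----------
   An element of CG is a function x : G -> C together with a duplicate-free
   list S containing its support. *)
Definition fin_supp {G : Type} (x : G -> Cx) (S : list G) : Prop :=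
  NoDup S /\ forall g, x g <> C0 -> In g S.

Definition conv {G : Type} (mul : G -> G -> G) (inv : G -> G)
  (S : list G) (x y : G -> Cx) : G -> Cx :=
  fun g => csum (fun a => Cmul (x a) (y (mul (inv a) g))) S.

Definition fadd {G : Type} (x y : G -> Cx) : G -> Cx := fun g => Cadd (x g) (y g).
Definition fscal {G : Type} (c : Cx) (x : G -> Cx) : G -> Cx := fun g => Cmul c (x g).

Definition delta {G : Type} (h : G) : G -> Cx :=
  fun g => if excluded_middle_informative (g = h) then C1 else C0.

Definition l2sq {G : Type} (xi : G -> Cx) (T : list G) : R :=
  rsum (fun g => Cnorm2 (xi g)) T.

Definition Hs_sq {G : Type} (l : G -> nat) (s : R) (x : G -> Cx) (S : list G) : R :=
  rsum (fun g => Cnorm2 (x g) * Rpower (1 + INR (l g)) (2 * s)) S.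

(* "||x * xi||_2 <= M ||xi||_2 for all finitely supported xi", i.e. the
   operator norm of left convolution by x on l^2(G) (= ||x||_{C*_red G}) is
   at most M.  The l^2 norm of the (finitely supported) function x * xi is
   expressed as the supremum of its partial sums over finite sets U. *)
Definition red_norm_le {G : Type} (mul : G -> G -> G) (inv : G -> G)
  (x : G -> Cx) (S : list G) (M : R) : Prop :=
  0 <= M /\
  forall (xi : G -> Cx) (T : list G), fin_supp xi T ->
  forall U : list G, NoDup U ->
    l2sq (conv mul inv S x xi) U <= M ^ 2 * l2sq xi T.

Definition property_RD {G : Type} (mul : G -> G -> G) (inv : G -> G)
  (l : G -> nat) : Prop :=
  exists (C s : R), 0 <= C /\
    forall (x : G -> Cx) (S : list G), fin_supp x S ->
      red_norm_le mul inv x S (C * sqrt (Hs_sq l s x S)).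

(* A bounded trace on C*_red G, given by its (unique-extension-determining)
   restriction to the dense subalgebra CG: a C-linear functional on CG,
   bounded for the reduced C*-norm, with tau(xy) = tau(yx). *)
Definition bounded_trace {G : Type} (mul : G -> G -> G) (inv : G -> G)
  (tau : (G -> Cx) -> Cx) : Prop :=
  (forall x y S T, fin_supp x S -> fin_supp y T ->
     tau (fadd x y) = Cadd (tau x) (tau y)) /\
  (forall c x S, fin_supp x S -> tau (fscal c x) = Cmul c (tau x)) /\
  (forall x y S T, fin_supp x S -> fin_supp y T ->
     tau (conv mul inv S x y) = tau (conv mul inv T y x)) /\
  (exists K : R, 0 <= K /\
     forall x S, fin_supp x S ->
     forall M, red_norm_le mul inv x S M -> Cmod (tau x) <= K * M).

Definition conjugate {G : Type} (mul : G -> G -> G) (inv : G -> G) (g h : G) : Prop :=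
  exists k, g = mul (mul k h) (inv k).

Definition has_card {G : Type} (P : G -> Prop) (n : nat) : Prop :=
  exists L : list G, NoDup L /\ length L = n /\ (forall g, In g L <-> P g).

(* real polynomial given by its coefficient list [a0; a1; ...] *)
Definition poly_eval (p : list R) (t : R) : R :=
  fold_right (fun a acc => a + t * acc) 0 p.

Definition n_m {G : Type} (mul : G -> G -> G) (inv : G -> G) (l : G -> nat)
  (h : G) (m n : nat) : Prop :=
  has_card (fun g => conjugate mul inv g h /\ l g = m) n.

Definition not_poly_growth {G : Type} (mul : G -> G -> G) (inv : G -> G)
  (l : G -> nat) (h : G) : Prop :=
  forall (P : list R) (N : nat), exists m n,
    (N <= m)%nat /\ n_m mul inv l h m n /\ INR n > poly_eval P (INR m).

(* Being a trace, tau is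
   constant on conjugacy classes: tau(k h k^-1) = tau(h).  For a finite set L
   of conjugates of h of length exactly m, the indicator 1_L therefore has
   tau(1_L) = |L| tau(h), while its Sobolev norm is ||1_L||_{H^s}^2 =
   |L| (1+m)^{2s}.  Boundedness of tau and Property RD give
   |L| |tau(h)| <= K C ||1_L||_{H^s}, i.e. the sphere estimate
        |L| |tau(h)|^2 <= (K C)^2 (1+m)^{2s} <= (K C)^2 2^d (1 + m^d)
   for any integer d > 2s.  If tau(h) <> 0 the number n_m of such conjugates
   is thus bounded by a fixed polynomial in m, contradicting the hypothesis
   that (n_m) does not grow polynomially. *)

From Pilot Require Import Defs.
From Stdlib Require Import Reals List Lra.
From Stdlib Require Import FunctionalExtensionality ClassicalEpsilon.
Import ListNotations.
Open Scope R_scope.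

Lemma Cx_eq (a b : Cx) : fst a = fst b -> snd a = snd b -> a = b.
Proof. destruct a, b; simpl; intros; subst; reflexivity. Qed.

Lemma Cnorm2_eq0 (z : Cx) : Cnorm2 z = 0 -> z = C0.
Proof.
  destruct z as [a b]; unfold Cnorm2; simpl; intros Hz.
  apply Cx_eq; unfold C0; simpl; nra.
Qed.

Definition Rscal (r : R) (z : Cx) : Cx := (r * fst z, r * snd z).

Lemma Cmod_Rscal (r : R) (z : Cx) : 0 <= r -> Cmod (Rscal r z) = r * Cmod z.
Proof.
  intros Hr. unfold Cmod, Cnorm2, Rscal; cbn [fst snd].
  replace (r * fst z * (r * fst z) + r * snd z * (r * snd z))
    with (Rsqr r * (fst z * fst z + snd z * snd z)) by (unfold Rsqr; ring).
  rewrite sqrt_mult_alt by apply Rle_0_sqr.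
  rewrite sqrt_Rsqr by exact Hr. reflexivity.
Qed.

Definition ind {G : Type} (L : list G) : G -> Cx :=
  fun g => if excluded_middle_informative (In g L) then Defs.C1 else C0.

Lemma fin_delta {G : Type} (a : G) : fin_supp (delta a) [a].
Proof.
  split; [repeat constructor; simpl; tauto|].
  intros g Hg. unfold delta in Hg.
  destruct (excluded_middle_informative (g = a)); [subst; simpl; auto | congruence].
Qed.

Lemma fin_ind {G : Type} (L : list G) : NoDup L -> fin_supp (ind L) L.
Proof.
  intros HL; split; [exact HL|].
  intros g Hg; unfold ind in Hg.
  destruct (excluded_middle_informative (In g L)); [assumption | congruence].
Qed.

(* 1_{} is the zero function, hence a multiple of itself by 0. *)
Lemma ind_nil {G : Type} : @ind G [] = fscal C0 (ind []).
Proof.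
  apply functional_extensionality; intro g; unfold ind, fscal.
  destruct (excluded_middle_informative (In g [])) as [[]|].
  apply Cx_eq; unfold Cmul, C0; simpl; ring.
Qed.

Lemma ind_cons {G : Type} (a : G) (L : list G) :
  ~ In a L -> ind (a :: L) = fadd (delta a) (ind L).
Proof.
  intros Ha. apply functional_extensionality; intro g; unfold ind, fadd, delta.
  destruct (excluded_middle_informative (g = a)) as [->|Hga].
  - destruct (excluded_middle_informative (In a (a :: L))) as [_|Hn];
      [|exfalso; apply Hn; left; reflexivity].
    destruct (excluded_middle_informative (In a L)); [contradiction|].
    apply Cx_eq; unfold Cadd, Defs.C1, C0; simpl; ring.
  - assert (Hin : In g (a :: L) <-> In g L)
      by (simpl; split; [intros [E|H]; [congruence|exact H] | auto]).
    destruct (excluded_middle_informative (In g (a :: L)));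
    destruct (excluded_middle_informative (In g L)); try tauto;
    apply Cx_eq; unfold Cadd, Defs.C1, C0; simpl; ring.
Qed.

Section GroupAlgebra.

Variables (G : Type) (mul : G -> G -> G) (inv : G -> G) (e : G).
Hypothesis HG : is_group mul inv e.

Lemma conv_delta (a b : G) :
  conv mul inv [a] (delta a) (delta b) = delta (mul a b).
Proof.
  destruct HG as [Hassoc [Hlid [Hrid [Hlinv Hrinv]]]].
  apply functional_extensionality; intro g.
  unfold conv, csum; simpl. unfold delta at 1.
  destruct (excluded_middle_informative (a = a)) as [_|]; [|congruence].
  assert (Hsolve : mul (inv a) g = b <-> g = mul a b).
  { split; intros E.
    - subst b; rewrite Hassoc, Hrinv, Hlid; reflexivity.
    - subst g; rewrite Hassoc, Hlinv, Hlid; reflexivity. }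
  unfold delta.
  destruct (excluded_middle_informative (mul (inv a) g = b));
  destruct (excluded_middle_informative (g = mul a b)); try tauto;
  apply Cx_eq; unfold Cadd, Cmul, Defs.C1, C0; simpl; ring.
Qed.

Variable tau : (G -> Cx) -> Cx.
Hypothesis Htau : bounded_trace mul inv tau.

(* A trace is a class function: tau(delta_{k h k^-1}) = tau(delta_h),
   since k h k^-1 = k (h k^-1) and h = (h k^-1) k. *)
Lemma tau_conj (g h : G) :
  conjugate mul inv g h -> tau (delta g) = tau (delta h).
Proof.
  intros [k Hk]. destruct Htau as [_ [_ [Htrace _]]].
  destruct HG as [Hassoc [_ [Hrid [Hlinv _]]]].
  assert (Eg : g = mul k (mul h (inv k))) by (rewrite Hassoc; exact Hk).
  assert (Eh : h = mul (mul h (inv k)) k)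
    by (rewrite <- Hassoc, Hlinv, Hrid; reflexivity).
  rewrite Eg, <- conv_delta, (Htrace _ _ _ _ (fin_delta _) (fin_delta _)),
    conv_delta, <- Eh.
  reflexivity.
Qed.

Lemma tau_ind (c : Cx) (L : list G) :
  NoDup L -> (forall g, In g L -> tau (delta g) = c) ->
  tau (ind L) = Rscal (INR (length L)) c.
Proof.
  destruct Htau as [Hadd [Hscal _]].
  induction L as [|a L IH]; intros HL Hc.
  - rewrite ind_nil, (Hscal _ _ [] (fin_ind [] (NoDup_nil _))).
    apply Cx_eq; unfold Rscal, Cmul, C0; simpl; ring.
  - apply NoDup_cons_iff in HL as [Ha HL].
    rewrite ind_cons, (Hadd _ _ _ _ (fin_delta a) (fin_ind L HL)) by exact Ha.
    rewrite IH, (Hc a); [| simpl; auto | exact HL | intros g Hg; apply Hc; simpl; auto].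
    apply Cx_eq; unfold Rscal, Cadd; rewrite length_cons, S_INR; simpl; ring.
Qed.

End GroupAlgebra.

Lemma rsum_const {G : Type} (f : G -> R) (v : R) (L : list G) :
  (forall g, In g L -> f g = v) -> rsum f L = INR (length L) * v.
Proof.
  induction L as [|a L IH]; intros Hf; [simpl; ring|].
  rewrite length_cons, S_INR.
  change (rsum f (a :: L)) with (f a + rsum f L).
  rewrite IH, (Hf a); [ring | simpl; auto | intros g Hg; apply Hf; simpl; auto].
Qed.

Lemma Hs_sq_sphere {G : Type} (l : G -> nat) (s : R) (m : nat) (L : list G) :
  (forall g, In g L -> l g = m) ->
  Hs_sq l s (ind L) L = INR (length L) * Rpower (1 + INR m) (2 * s).
Proof.
  intros Hm. apply rsum_const. intros g Hg.
  unfold ind. destruct (excluded_middle_informative (In g L)); [|contradiction].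
  rewrite (Hm g Hg). unfold Cnorm2, Defs.C1; simpl. ring.
Qed.

Lemma scaled_sqrt_bound (N a M r : R) :
  0 <= N -> 0 <= a -> 0 <= M -> 0 <= r ->
  N * sqrt a <= M * sqrt (N * r) -> N * a <= M ^ 2 * r.
Proof.
  intros HN Ha HM Hr Hle.
  destruct (Req_dec N 0) as [->|HN0]; [nra|].
  assert (Hsq : (N * sqrt a) * (N * sqrt a) <= (M * sqrt (N * r)) * (M * sqrt (N * r))).
  { apply Rmult_le_compat; auto; apply Rmult_le_pos; auto; apply sqrt_pos. }
  replace ((N * sqrt a) * (N * sqrt a)) with (N * N * (sqrt a * sqrt a)) in Hsq by ring.
  replace ((M * sqrt (N * r)) * (M * sqrt (N * r)))
    with (M * M * (sqrt (N * r) * sqrt (N * r))) in Hsq by ring.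
  rewrite !sqrt_sqrt in Hsq by nra.
  apply Rmult_le_reg_l with N; [lra | nra].
Qed.

Lemma sphere_estimate {G : Type} (mul : G -> G -> G) (inv : G -> G) (e : G)
  (l : G -> nat) (h : G) (tau : (G -> Cx) -> Cx) (K C s : R) (m : nat)
  (L : list G) :
  is_group mul inv e -> bounded_trace mul inv tau -> 0 <= K -> 0 <= C ->
  (forall x S, fin_supp x S ->
     forall M, red_norm_le mul inv x S M -> Cmod (tau x) <= K * M) ->
  (forall x S, fin_supp x S ->
     red_norm_le mul inv x S (C * sqrt (Hs_sq l s x S))) ->
  NoDup L -> (forall g, In g L -> conjugate mul inv g h /\ l g = m) ->
  INR (length L) * Cnorm2 (tau (delta h))
    <= (K * C) ^ 2 * Rpower (1 + INR m) (2 * s).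
Proof.
  intros HG Htau HK HC Hbound HRD HL HLh.
  assert (Hval : tau (ind L) = Rscal (INR (length L)) (tau (delta h))).
  { apply (tau_ind G mul inv tau Htau); [exact HL|].
    intros g Hg. apply (tau_conj G mul inv e HG tau Htau), HLh, Hg. }
  assert (Hnorm : Hs_sq l s (ind L) L = INR (length L) * Rpower (1 + INR m) (2 * s))
    by (apply Hs_sq_sphere; intros g Hg; apply HLh, Hg).
  pose proof (Hbound _ _ (fin_ind L HL) _ (HRD _ _ (fin_ind L HL))) as Hle.
  rewrite Hval, Cmod_Rscal, Hnorm, <- Rmult_assoc in Hle by apply pos_INR.
  apply scaled_sqrt_bound; auto using pos_INR, Rmult_le_pos.
  - unfold Cnorm2; nra.
  - unfold Rpower; left; apply exp_pos.
Qed.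

Lemma Rpower_poly_bound (t s : R) (d : nat) :
  0 <= t -> 2 * s <= INR d -> Rpower (1 + t) (2 * s) <= 2 ^ d * (1 + t ^ d).
Proof.
  intros Ht Hd.
  apply Rle_trans with ((1 + t) ^ d).
  { rewrite <- Rpower_pow by lra. apply Rle_Rpower; lra. }
  assert (0 <= t ^ d) by (apply pow_le; lra).
  assert (0 < 2 ^ d) by (apply pow_lt; lra).
  destruct (Rle_dec t 1).
  - assert ((1 + t) ^ d <= 2 ^ d) by (apply pow_incr; lra). nra.
  - assert ((1 + t) ^ d <= (2 * t) ^ d) by (apply pow_incr; lra).
    rewrite Rpow_mult_distr in *. nra.
Qed.

Lemma count_bound (N q X r P : R) :
  0 < q -> 0 <= X -> r <= P -> N * q <= X * r -> N <= X / q * P.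
Proof.
  intros Hq HX HrP HN.
  apply Rmult_le_reg_r with q; [exact Hq|].
  replace (X / q * P * q) with (X * P) by (field; lra).
  apply Rle_trans with (X * r); [exact HN | apply Rmult_le_compat_l; assumption].
Qed.

Lemma poly_eval_binomial (B t : R) (k : nat) :
  poly_eval (B :: repeat 0 k ++ [B]) t = B * (1 + t ^ S k).
Proof.
  assert (Hmono : forall j, poly_eval (repeat 0 j ++ [B]) t = t ^ j * B)
    by (induction j; simpl; [ring | rewrite IHj; ring]).
  simpl. rewrite Hmono. ring.
Qed.

Theorem mainTheorem5 (G : Type) (mul : G -> G -> G) (inv : G -> G) (e : G)
  (l : G -> nat) (h : G)
  (HG : is_group mul inv e)
  (Hl : is_length_function mul inv e l)
  (HRD : property_RD mul inv l)
  (Hgrowth : not_poly_growth mul inv l h)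
  (tau : (G -> Cx) -> Cx)
  (Htau : bounded_trace mul inv tau) :
  tau (delta h) = C0.
Proof.
  destruct (Req_dec (Cnorm2 (tau (delta h))) 0) as [Hq0|Hq];
    [apply Cnorm2_eq0, Hq0|].
  assert (Hqpos : 0 < Cnorm2 (tau (delta h))) by (unfold Cnorm2 in *; nra).
  destruct HRD as [C [s [HC HRDs]]].
  pose proof Htau as [_ [_ [_ [K [HK Hbound]]]]].
  destruct (INR_unbounded (2 * s)) as [k Hk].
  (* The sphere estimate gives n_m <= A 2^(k+1) (1 + m^(k+1)) for every m,
     which stays below P(m) = (A + 1) 2^(k+1) (1 + m^(k+1)); but the growth
     hypothesis provides an m with n_m > P(m). *)
  set (A := (K * C) ^ 2 / Cnorm2 (tau (delta h))).
  set (B := (A + 1) * 2 ^ S k).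
  destruct (Hgrowth (B :: repeat 0 k ++ [B]) 0%nat)
    as [m [n [_ [[L [HL [Hlen HLh]]] Hbig]]]].
  rewrite poly_eval_binomial in Hbig.
  pose proof (sphere_estimate mul inv e l h tau K C s m L HG Htau HK HC Hbound HRDs
    HL (fun g Hg => proj1 (HLh g) Hg)) as Hsphere.
  rewrite Hlen in Hsphere.
  pose proof (count_bound _ _ _ _ _ Hqpos (pow2_ge_0 _)
    (Rpower_poly_bound (INR m) s (S k) (pos_INR m) ltac:(rewrite S_INR; lra))
    Hsphere) as Hn.
  fold A in Hn.
  assert (HA : 0 <= A) by (unfold A, Rdiv; apply Rmult_le_pos; [nra | left;
    apply Rinv_0_lt_compat, Hqpos]).
  assert (0 <= 2 ^ S k * (1 + INR m ^ S k))
    by (pose proof (pow_le (INR m) (S k) (pos_INR m));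
        apply Rmult_le_pos; [apply pow_le|]; lra).
  unfold B in Hbig. nra.
Qed.
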